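(* Let $v_2$, $v_3$ and $\delta$ satisfy the standing assumptions described in the context. A deformation $y:H\to\mathbb{R}^3$ is a ground state (i.e. a minimizer of $E$ among all maps $H\to\mathbb{R}^3$) if and only if all its cells are optimal, i.e. every cell $(y(x_1),\dots,y(x_6))$ of $y$ is a minimizer of $E_{\rm cell}$ over $(\mathbb{R}^3)^6$.
   Context: Hexagonal lattice: $H=\{sa+tb+rc: s,t\in\mathbb{Z},\ r\in\{0,1\}\}\subset\mathbb{R}^2$ with $a=(3/2,\sqrt3/2)$, $b=(0,\sqrt3)$, $c=(1,0)$. The hexagonal graph connects points of $H$ at distance $1$. A reference cell is a set $\{x_1,\dots,x_6\}\subset H$ forming a simple cycle (a hexagon) in the hexagonal graph, labeled counterclockwise so that $x_1$ is the vertex of the form $na+mb$ ($n,m\in\mathbb{Z}$) with $n+m$ minimal in the cell. For a deformation $y:H\to\mathbb{R}^3$, the corresponding cell is $(y_1,\dots,y_6)$ with $y_i=y(x_i)$; indices are taken modulo $6$. Barycenters of reference cells are the points $(1/2,\sqrt3/2)+sa+tb$, $(s,t)\in\mathbb{Z}^2$, and the cell is indexed by $(s,t)$. Cell energy: $$E_{\rm cell}(y_1,\dots,y_6)=\tfrac12\sum_{i=1}^6 v_2(|y_i-y_{i-1}|)+\sum_{i=1}^6 v_2(|y_i-y_{i-2}|)+\sum_{i=1}^6 v_3(\theta_i),$$ where $\theta_i\in[0,\pi]$ is the angle at $y_i$ between the segments $\{y_i,y_{i+1}\}$ and $\{y_i,y_{i-1}\}$. Energy of a deformation: $E(y)=\sup_{m\in\mathbb{N}}\frac{1}{\#(T\cap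 B_m)}\sum_{(s,t)\in T\cap B_m}E_{\rm cell}(s,t)$, where $T=(1/2,\sqrt3/2)+\{sa+tb:s,t\in\mathbb{Z}\}$, $B_m$ is the ball of radius $m$ centered at $0$, and $E_{\rm cell}(s,t)$ is the cell energy of the cell with barycenter $(1/2,\sqrt3/2)+sa+tb$. An optimal cell is a minimizer of $E_{\rm cell}$ on $(\mathbb{R}^3)^6$. Standing assumptions: $v_2:(0,\infty)\to[-1,\infty)$ is continuous, attains its minimum value $-1$ only at $1$, is decreasing on $(0,1)$ and increasing on $[1,\infty)$, and is differentiable on $(5/4,\sqrt3]$ with $v_2'>0$ there; $v_3:[0,\pi]\to[0,\infty)$ is continuous, attains its minimum value $0$ only at $2\pi/3$, and is differentiable at $2\pi/3$. Moreover there is $0<\delta\le 0.2$ with: (i) $v_2(1-\delta)>11+12v_2(\sqrt3)$; (ii) $v_2(1+\delta)>-1+12v_2(\sqrt3)-12v_2(\sqrt3(1-\delta)^2)$; (iii) $v_3(\theta)>6+6v_2(\sqrt3)$ whenever $|\theta-2\pi/3|\ge\delta$; (iv) the map $(\ell_1,\ell_2,\theta)\mapsto \frac14 v_2(\ell_1)+\frac14 v_2(\ell_2)+v_2\big((\ell_1^2+\ell_2^2-2\ell_1\ell_2\cos\theta)^{1/2}\big)+v_3(\theta)$ is strictly convex on $\{|\ell_1-1|<\delta,\ |\ell_2-1|<\delta,\ |\theta-2\pi/3|<\delta\}$. *)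

From HB Require Import structures.
From mathcomp Require Import all_boot all_order all_algebra.
From mathcomp Require Import all_classical all_reals all_analysis.
From mathcomp Require Import ring lra.
Set Implicit Arguments. Unset Strict Implicit. Unset Printing Implicit Defensive.
Import Order.TTheory GRing.Theory Num.Theory.
Import numFieldNormedType.Exports.
Local Open Scope classical_set_scope.
Local Open Scope ring_scope.

Lemma ball_bound (R : realType) (S T M : R) :
  0 <= M ->
  (1 / 2 + 3 / 2 * S) ^+ 2 + (Num.sqrt 3 / 2 + Num.sqrt 3 / 2 * S + Num.sqrt 3 * T) ^+ 2 <= M ^+ 2 ->
  `|S| <= 3 * M + 3 /\ `|T| <= 3 * M + 3.
Proof.
move=> M0 H.
have h3 : Num.sqrt (3:R) ^+ 2 = 3 by rewrite sqr_sqrtr.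
set r := Num.sqrt 3 in H h3.
have e : (r / 2 + r / 2 * S + r * T) ^+ 2 = 3 * (1/2 + S/2 + T) ^+ 2.
  by rewrite -h3; ring.
rewrite e in H.
have q1 := sqr_ge0 (1/2 + S/2 + T).
have q2 := sqr_ge0 (1 / 2 + 3 / 2 * S).
have hx : (1 / 2 + 3 / 2 * S) ^+ 2 <= M ^+ 2 by lra.
have hy : (1/2 + S/2 + T) ^+ 2 <= M ^+ 2 by lra.
have ax : `|1 / 2 + 3 / 2 * S| <= M by rewrite -ler_sqr ?nnegrE ?normr_ge0 // real_normK ?num_real.
have ay : `|1 / 2 + S/2 + T| <= M by rewrite -ler_sqr ?nnegrE ?normr_ge0 // real_normK ?num_real.
move: ax ay => /ler_normlP[a1 a2] /ler_normlP[b1 b2].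
split; apply/ler_normlP; split; lra.
Qed.

Section Hex.
Variable R : realType.

Definition vec := 'rV[R]_3.
Definition dot (u v : vec) : R := \sum_(i < 3) u ord0 i * v ord0 i.
(* Euclidean norm (NOT the library's max-norm on 'rV) *)
Definition enorm (u : vec) : R := Num.sqrt (dot u u).
Definition dist3 (u v : vec) : R := enorm (u - v).
Definition angle (p q r : vec) : R :=
  acos (dot (r - q) (p - q) / (enorm (r - q) * enorm (p - q))).

(* A point of H is s a + t b + r c with s,t : int, r : bool (r = 0/1).
   The map (s,t,r) |-> s a + t b + r c is injective, so a deformation
   y : H -> R^3 is represented by a function of (s,t,r). *)
Definition sqrt3 : R := Num.sqrt 3.
Definition posH (s t : int) (r : bool) : R * R :=
  (3 / 2 * s%:~R + (r : nat)%:R, sqrt3 / 2 * s%:~R + sqrt3 * t%:~R).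
Definition deformation := int -> int -> bool -> vec.

(* A cell is a 6-tuple (y_1,...,y_6), stored with labels 0..5 (label k here
   = label k+1 in the paper); indices are taken modulo 6. *)
Definition cell := 'I_6 -> vec.
Definition sh (i : 'I_6) (k : nat) : 'I_6 := inZp (i + k).
(* i-1 = sh i 5, i-2 = sh i 4, i+1 = sh i 1 (mod 6) *)

(* Reference cell with barycenter (1/2, sqrt3/2) + s a + t b, labeled
   counterclockwise starting from the vertex s a + t b (the vertex of the
   form n a + m b with minimal n + m):
     x1 = sa+tb, x2 = sa+tb+c, x3 = (s+1)a+tb, x4 = sa+(t+1)b+c,
     x5 = sa+(t+1)b, x6 = (s-1)a+(t+1)b+c. *)
Definition cellH (s t : int) (i : 'I_6) : int * int * bool :=
  match val i with
  | 0 => (s, t, false)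
  | 1 => (s, t, true)
  | 2 => (s + 1, t, false)
  | 3 => (s, t + 1, true)
  | 4 => (s, t + 1, false)
  | _ => (s - 1, t + 1, true)
  end.
Definition cell_of (y : deformation) (s t : int) : cell :=
  fun i => let: (a, b, r) := cellH s t i in y a b r.

Definition barycenter (s t : int) : R * R :=
  (1 / 2 + 3 / 2 * s%:~R, sqrt3 / 2 + sqrt3 / 2 * s%:~R + sqrt3 * t%:~R).

Definition Ecell (v2 v3 : R -> R) (c : cell) : R :=
  2^-1 * (\sum_(i < 6) v2 (dist3 (c i) (c (sh i 5))))
  + \sum_(i < 6) v2 (dist3 (c i) (c (sh i 4)))
  + \sum_(i < 6) v3 (angle (c (sh i 5)) (c i) (c (sh i 1))).

(* v2 is only defined on (0,oo): a cell is admissible when all the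
   distances entering E_cell are positive (this also makes all angles
   well defined). *)
Definition admissible_cell (c : cell) : Prop :=
  forall i : 'I_6, c i != c (sh i 5) /\ c i != c (sh i 4).
Definition optimal_cell (v2 v3 : R -> R) (c : cell) : Prop :=
  admissible_cell c /\
  forall c' : cell, admissible_cell c' -> Ecell v2 v3 c <= Ecell v2 v3 c'.
Definition admissible (y : deformation) : Prop :=
  forall s t, admissible_cell (cell_of y s t).

Definition zrange (N : nat) : seq int :=
  [seq (i%:Z - N%:Z) | i <- iota 0 (2 * N).+1].
Definition in_ball (m : nat) (st : int * int) : bool :=
  let: (bx, by_) := barycenter st.1 st.2 in bx ^+ 2 + by_ ^+ 2 <= (m%:R) ^+ 2.
(* T ∩ B_m (closed ball); the box [-(3m+3), 3m+3]^2 contains all of it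
   (see lemma ball_in_box below) *)
Definition ball_cells (m : nat) : seq (int * int) :=
  [seq st <- [seq (s, t) | s <- zrange (3 * m + 3), t <- zrange (3 * m + 3)]
     | in_ball m st].
Definition avg_energy (v2 v3 : R -> R) (y : deformation) (m : nat) : R :=
  (\sum_(st <- ball_cells m) Ecell v2 v3 (cell_of y st.1 st.2))
    / (size (ball_cells m))%:R.
Definition energy (v2 v3 : R -> R) (y : deformation) : \bar R :=
  ereal_sup [set (avg_energy v2 v3 y m)%:E | m in [set m : nat | (1 <= m)%N]].

Definition ground_state (v2 v3 : R -> R) (y : deformation) : Prop :=
  admissible y /\
  forall z : deformation, admissible z -> (energy v2 v3 y <= energy v2 v3 z)%E.

Definition standing_assumptions (v2 v3 : R -> R) (delta : R) : Prop :=
  ((forall x, 0 < x -> {for x, continuous v2}) /\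
   (forall x, 0 < x -> -1 <= v2 x) /\ v2 1 = -1 /\
   (forall x, 0 < x -> v2 x = -1 -> x = 1) /\
   (forall x x', 0 < x -> x < x' -> x' < 1 -> v2 x' < v2 x) /\
   (forall x x', 1 <= x -> x < x' -> v2 x < v2 x') /\
   (forall x, 5 / 4 < x <= sqrt3 -> derivable v2 x 1 /\ 0 < derive1 v2 x)) /\
  ({within `[0, pi], continuous v3} /\
   (forall th, 0 <= th <= pi -> 0 <= v3 th) /\
   v3 (2 * pi / 3) = 0 /\
   (forall th, 0 <= th <= pi -> v3 th = 0 -> th = 2 * pi / 3) /\
   derivable v3 (2 * pi / 3) 1) /\
  (0 < delta <= 1 / 5 /\
   v2 (1 - delta) > 11 + 12 * v2 sqrt3 /\
   v2 (1 + delta) > -1 + 12 * v2 sqrt3 - 12 * v2 (sqrt3 * (1 - delta) ^+ 2) /\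
   (forall th, 0 <= th <= pi -> `|th - 2 * pi / 3| >= delta ->
                  v3 th > 6 + 6 * v2 sqrt3) /\
   (let f (l1 l2 th : R) :=
      4^-1 * v2 l1 + 4^-1 * v2 l2
      + v2 (Num.sqrt (l1 ^+ 2 + l2 ^+ 2 - 2 * l1 * l2 * cos th)) + v3 th in
    let inbox (l1 l2 th : R) :=
      [/\ `|l1 - 1| < delta, `|l2 - 1| < delta & `|th - 2 * pi / 3| < delta] in
    forall l1 l2 th l1' l2' th' lam,
      inbox l1 l2 th -> inbox l1' l2' th' ->
      (l1, l2, th) <> (l1', l2', th') -> 0 < lam < 1 ->
      f (lam * l1 + (1 - lam) * l1') (lam * l2 + (1 - lam) * l2')
        (lam * th + (1 - lam) * th')
      < lam * f l1 l2 th + (1 - lam) * f l1' l2' th')).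

Lemma ball_in_box (m : nat) (s t : int) : in_ball m (s, t) ->
  `|s%:~R : R| <= 3 * m%:R + 3 /\ `|t%:~R : R| <= 3 * m%:R + 3.
Proof. by rewrite /in_ball /barycenter /= => /ball_bound; apply. Qed.

End Hex.

From mathcomp Require Import all_boot all_order all_algebra.
From mathcomp Require Import all_classical all_reals all_analysis.
From mathcomp Require Import ring lra zify.
Import Order.TTheory GRing.Theory Num.Theory.
Import numFieldNormedType.Exports.
Local Open Scope ring_scope.
Set Implicit Arguments. Unset Strict Implicit. Unset Printing Implicit Defensive.

(* The energy of a cell is the sum of six vertex energies [f(l1, l2, th)], one per vertex,
   built from the two bonds and the angle there, the second-neighbour distance being given by
   the law of cosines. Assumptions (i)-(iii) make [f] exceed [f(1, 1, 2pi/3)] outside the box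
   of (iv), so every cell energy is at least six times the infimum [m] of [f] over the box.
   By convexity (iv) a nearly minimizing vertex can be symmetrized to some [(l, l, th)], and
   an angle above [2pi/3] can be lowered to [2pi/3]; a buckled lattice then realizes this
   vertex at every vertex of every cell, so a ground state has energy at most [6 m]. A
   non-optimal cell lifts the average over a large ball strictly above [6 m], so ground states
   have optimal cells; conversely, if all cells are optimal they all carry the minimal cell
   energy, which bounds the averages of [y] from above and those of any competitor from
   below. *)

Section Euclid.
Variable R : realType.
Implicit Types (u v p q r : vec R) (a b c x y w : R).

Definition mk3 a b c : vec R := \row_(k < 3) nth 0 [:: a; b; c] k.

Lemma dot_mk3 a b c x y w : dot (mk3 a b c) (mk3 x y w) = a * x + b * y + c * w.
Proof. by rewrite /dot !big_ord_recr !big_ord0 /= !mxE /= add0r. Qed.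

Lemma mk3B a b c x y w : mk3 a b c - mk3 x y w = mk3 (a - x) (b - y) (c - w).
Proof. by apply/matrixP => i j; rewrite !mxE; case: j => [[|[|[|]]] ?]. Qed.

Lemma dotC u v : dot u v = dot v u.
Proof. by apply: eq_bigr => i _; rewrite mulrC. Qed.

Lemma dot_ge0 u : 0 <= dot u u.
Proof. by rewrite sumr_ge0 // => i _; rewrite -expr2 sqr_ge0. Qed.

Lemma dot_eq0 u : (dot u u == 0) = (u == 0).
Proof.
apply/eqP/eqP => [|->]; last by rewrite /dot big1 // => i _; rewrite mxE mul0r.
rewrite /dot !big_ord_recr !big_ord0 /= add0r -!expr2.
set a := u _ _; set b := u _ _; set c := u _ _ => h.
have [a0 b0 c0] : [/\ a = 0, b = 0 & c = 0].
  by have := sqr_ge0 a; have := sqr_ge0 b; have := sqr_ge0 c; rewrite !expr2; split; nra.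
apply/matrixP => i j; rewrite !mxE (ord1 i).
by case: j => [[|[|[|//]]] j]; [rewrite -a0 | rewrite -b0 | rewrite -c0];
  congr (u _ _); apply: val_inj.
Qed.

Lemma dot_sqr_le u v : dot u v ^+ 2 <= dot u u * dot v v.
Proof.
rewrite /dot !big_ord_recr !big_ord0 /= !add0r.
set a := u _ _; set b := u _ _; set c := u _ _.
set x := v _ _; set y := v _ _; set z := v _ _.
(* Lagrange's identity *)
have -> : (a * x + b * y + c * z) ^+ 2 = (a * a + b * b + c * c) * (x * x + y * y + z * z)
   - ((a * y - b * x) ^+ 2 + (a * z - c * x) ^+ 2 + (b * z - c * y) ^+ 2) by ring.
by rewrite gerBl !addr_ge0 ?sqr_ge0.
Qed.

Lemma dotBB p q r :
  dot (p - r) (p - r) = dot (p - q) (p - q) + dot (r - q) (r - q) - 2 * dot (r - q) (p - q).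
Proof. by rewrite /dot !big_ord_recr !big_ord0 /= !mxE /=; ring. Qed.

Lemma dist3C p q : dist3 p q = dist3 q p.
Proof.
by rewrite /dist3 /enorm -opprB /dot; congr Num.sqrt; apply: eq_bigr => i _; rewrite !mxE; ring.
Qed.

Lemma dist3_sqr p q : dist3 p q ^+ 2 = dot (p - q) (p - q).
Proof. by rewrite sqr_sqrtr // dot_ge0. Qed.

Lemma dist3_gt0 p q : (0 < dist3 p q) = (p != q).
Proof. by rewrite sqrtr_gt0 lt_def dot_ge0 dot_eq0 subr_eq0 andbT. Qed.

Lemma cos_angle_bound p q r : p != q -> r != q ->
  -1 <= dot (r - q) (p - q) / (dist3 r q * dist3 p q) <= 1.
Proof.
move=> pq rq; have P0 : 0 < dist3 r q * dist3 p q by rewrite mulr_gt0 ?dist3_gt0.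
have : dot (r - q) (p - q) ^+ 2 <= (dist3 r q * dist3 p q) ^+ 2.
  by rewrite exprMn !dist3_sqr dot_sqr_le.
rewrite -ler_sqrt ?sqr_ge0 // !sqrtr_sqr (gtr0_norm P0) => /ler_normlP[h1 h2].
by rewrite ler_pdivlMr // ler_pdivrMr // mulN1r mul1r h2 lerNl h1.
Qed.

Lemma angle_in_0pi p q r : p != q -> r != q -> 0 <= angle p q r <= pi.
Proof. by move=> pq rq; rewrite acos_ge0 ?acos_lepi ?cos_angle_bound. Qed.

Definition third_side (l1 l2 th : R) : R := Num.sqrt (l1 ^+ 2 + l2 ^+ 2 - 2 * l1 * l2 * cos th).

Lemma third_sideC (l1 l2 th : R) : third_side l1 l2 th = third_side l2 l1 th.
Proof. by rewrite /third_side; congr Num.sqrt; ring. Qed.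

Lemma law_of_cosines p q r : p != q -> r != q ->
  dist3 r p = third_side (dist3 r q) (dist3 p q) (angle p q r).
Proof.
move=> pq rq; rewrite /third_side acosK ?in_itv /= ?cos_angle_bound //.
have [d1 d2] : 0 < dist3 r q /\ 0 < dist3 p q by rewrite !dist3_gt0.
rewrite -[LHS]ger0_norm ?sqrtr_ge0 // -sqrtr_sqr (dist3_sqr r p) (dotBB r q p) -!dist3_sqr.
congr Num.sqrt; rewrite -/(dist3 r q) -/(dist3 p q) (dotC (p - q)).
by field; rewrite !gt_eqF.
Qed.

End Euclid.

Section Trigonometry.
Variable R : realType.
Implicit Types x y d : R.

Lemma cos_le_cos x y : 0 <= x -> x <= y -> y <= pi -> cos y <= cos x.
Proof.
move=> x0 xy ypi; rewrite leNgt ltr_cos ?in_itv /= ?x0 ?ypi ?(le_trans x0 xy) ?(le_trans xy ypi) //.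
by rewrite -leNgt.
Qed.

Lemma cos_2pi3 : cos (2 * pi / 3) = - 2^-1 :> R.
Proof.
have hp := pi_ge2 R; set c := cos (2 * pi / 3).
have c_double : c ^+ 2 *+ 2 - 1 = c.
  rewrite -cos_mulr2n.
  have -> : (2 * pi / 3) *+ 2 = - (2 * pi / 3) + (pi : R) *+ 2 by field.
  by rewrite cosD2pi cosN.
have c_ne1 : c != 1.
  have h23 : 2 * pi / 3 \in `[0, pi : R] by rewrite in_itv /=; apply/andP; split; lra.
  have h0 : 0 \in `[0, pi : R] by rewrite in_itv /= lexx pi_ge0.
  by apply/eqP; rewrite -cos0 => /(cos_inj h23 h0); lra.
have : (2 * c + 1) * (c - 1) = 0 by rewrite -[RHS](subrr c) -{3}c_double; ring.
by move/eqP; rewrite mulf_eq0 subr_eq0 (negbTE c_ne1) orbF => /eqP; lra.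
Qed.

Lemma sin_le_id x : 0 <= x -> sin x <= x.
Proof.
rewrite le_eqVlt => /predU1P[<-|x0]; first by rewrite sin0.
have [c _] := MVT x0 (fun y _ => is_derive_sin y) (continuous_subspaceT (@continuous_sin R)).
by rewrite sin0 !subr0 => ->; rewrite ler_piMl ?cos_le1 // ltW.
Qed.

Lemma cos_ge_1_sqr x : 0 <= x <= pi -> 1 - x ^+ 2 / 2 <= cos x.
Proof.
move=> /andP[x0 xpi].
have x2 : 0 <= x / 2 <= pi by apply/andP; split; lra.
have -> : cos x = 1 - 2 * sin (x / 2) ^+ 2.
  have -> : 1 - 2 * sin (x / 2) ^+ 2 = cos ((x / 2) *+ 2) by rewrite cos_mulr2n cos2sin2; ring.
  by congr cos; rewrite mulr2n; field.
have : sin (x / 2) ^+ 2 <= (x / 2) ^+ 2 by rewrite ler_sqr ?nnegrE ?sin_le_id ?sin_ge0_pi //; lra.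
lra.
Qed.

Lemma cos_le_near_2pi3 d x : 0 < d <= 1 / 5 -> 2 * pi / 3 - d <= x -> x <= pi ->
  cos x <= - 2^-1 + d + d ^+ 2 / 4.
Proof.
move=> /andP[d0 d15] h1 h2; have hp := pi_ge2 R.
have dpi : 0 <= d <= pi by apply/andP; split; lra.
apply: (le_trans (cos_le_cos _ h1 h2)); first lra.
rewrite cosB cos_2pi3.
have : sin (2 * pi / 3) * sin d <= d.
  by apply: le_trans (sin_le_id (ltW d0)); rewrite ler_piMl ?sin_le1 ?sin_ge0_pi.
have := cos_ge_1_sqr dpi; lra.
Qed.

Lemma sqrt3_sqr : sqrt3 R ^+ 2 = 3.
Proof. by rewrite sqr_sqrtr. Qed.

Lemma sqrt3_bounds : 25 / 16 <= sqrt3 R <= 2.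
Proof.
have s0 : 0 <= sqrt3 R by exact: sqrtr_ge0.
by apply/andP; split; rewrite -ler_sqr ?nnegrE ?sqrt3_sqr ?expr2 //; lra.
Qed.

End Trigonometry.

Lemma sh_sh (i : 'I_6) a b : sh (sh i a) b = sh i (a + b).
Proof. by apply: val_inj; rewrite /= modnDml addnA. Qed.

Lemma sh6 (i : 'I_6) : sh i 6 = i.
Proof. by apply: val_inj; rewrite /= modnDr modn_small. Qed.

Lemma sum_sh1 (R : realType) (F : 'I_6 -> R) : \sum_(i < 6) F (sh i 1) = \sum_(i < 6) F i.
Proof.
apply: esym; apply: reindex_inj => i j /(congr1 (sh^~ 5)).
by rewrite !sh_sh !sh6.
Qed.

Lemma admissible_neighbours (R : realType) (c : cell R) (i : 'I_6) : admissible_cell c ->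
  [/\ c (sh i 1) != c i, c (sh i 5) != c i & c (sh i 1) != c (sh i 5)].
Proof.
move=> adm; have [h1 h2] := adm (sh i 1); have [h3 _] := adm i.
by rewrite !sh_sh sh6 in h1 h2; split; rewrite // eq_sym.
Qed.

Section VertexEnergy.
Variable R : realType.
Implicit Types (l th : R).

(* Bonds carry weight 1/2 in [Ecell] and are shared by their two end vertices. *)
Definition vertex_energy (v2 v3 : R -> R) (l1 l2 th : R) : R :=
  4^-1 * v2 l1 + 4^-1 * v2 l2 + v2 (third_side l1 l2 th) + v3 th.

Lemma vertex_energyC (v2 v3 : R -> R) (l1 l2 th : R) :
  vertex_energy v2 v3 l1 l2 th = vertex_energy v2 v3 l2 l1 th.
Proof. by rewrite /vertex_energy third_sideC; ring. Qed.

Lemma third_side_ref : third_side 1 1 (2 * pi / 3) = sqrt3 R.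
Proof. by rewrite /third_side cos_2pi3 /sqrt3; congr Num.sqrt; field. Qed.

Lemma third_side_le l th th' : 0 <= l -> cos th' <= cos th ->
  third_side l l th <= third_side l l th'.
Proof.
by move=> l0 hcos; apply: ler_wsqrtr; rewrite -!mulrA lerD2l lerN2 !ler_wpM2l // mulr_ge0.
Qed.

Lemma Ecell_vertex_sum (v2 v3 : R -> R) (c : cell R) : admissible_cell c ->
  Ecell v2 v3 c = \sum_(i < 6) vertex_energy v2 v3 (dist3 (c (sh i 1)) (c i))
                    (dist3 (c (sh i 5)) (c i)) (angle (c (sh i 5)) (c i) (c (sh i 1))).
Proof.
move=> adm; rewrite /Ecell /vertex_energy !big_split /= -!mulr_sumr.
have edges1 : \sum_(i < 6) v2 (dist3 (c (sh i 1)) (c i)) =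
                \sum_(i < 6) v2 (dist3 (c i) (c (sh i 5))).
  rewrite -(sum_sh1 (fun i => v2 (dist3 (c i) (c (sh i 5))))).
  by apply: eq_bigr => i _; rewrite sh_sh sh6.
have edges2 : \sum_(i < 6) v2 (dist3 (c (sh i 5)) (c i)) =
                \sum_(i < 6) v2 (dist3 (c i) (c (sh i 5))).
  by apply: eq_bigr => i _; rewrite dist3C.
have diagonals : \sum_(i < 6) v2 (dist3 (c i) (c (sh i 4))) =
  \sum_(i < 6) v2 (third_side (dist3 (c (sh i 1)) (c i)) (dist3 (c (sh i 5)) (c i))
                              (angle (c (sh i 5)) (c i) (c (sh i 1)))).
  rewrite -(sum_sh1 (fun i => v2 (dist3 (c i) (c (sh i 4))))); apply: eq_bigr => i _.
  by have [h1 h2 _] := admissible_neighbours i adm; rewrite sh_sh (law_of_cosines h2 h1).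
by rewrite edges1 edges2 diagonals; field.
Qed.

End VertexEnergy.

Section Buckled.
Variable R : realType.

(* The lattice vectors [a] and [b] go to [al (1,0,-1)] and [al (0,1,-1)], and the bond
   [c] to [(al + be, be, be)]: all cells become congruent skew hexagons. *)
Definition buckled (al be : R) : deformation R := fun s t r =>
  mk3 (al * s%:~R + (if r then al + be else 0)) (al * t%:~R + (if r then be else 0))
      (al * (- s%:~R - t%:~R) + (if r then be else 0)).

Lemma buckled_cell_dots al be s t (i : 'I_6) :
  let c := cell_of (buckled al be) s t in
  [/\ dot (c (sh i 1) - c i) (c (sh i 1) - c i) = al ^+ 2 + 2 * al * be + 3 * be ^+ 2,
      dot (c (sh i 5) - c i) (c (sh i 5) - c i) = al ^+ 2 + 2 * al * be + 3 * be ^+ 2,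
      dot (c i - c (sh i 4)) (c i - c (sh i 4)) = 2 * al ^+ 2 &
      dot (c (sh i 1) - c i) (c (sh i 5) - c i) = 3 * be ^+ 2 + 2 * al * be].
Proof.
by case: i => [[|[|[|[|[|[|//]]]]]] hi];
  rewrite /cell_of /cellH /sh /= /buckled !mk3B !dot_mk3 ?rmorphD ?rmorphB ?rmorph1 /=; split; ring.
Qed.

Lemma buckled_cell (v2 v3 : R -> R) (l th al be : R) s t :
  0 < l -> 0 <= th <= pi -> 0 < al ->
  al ^+ 2 = l ^+ 2 * (1 - cos th) -> al ^+ 2 + 2 * al * be + 3 * be ^+ 2 = l ^+ 2 ->
  let c := cell_of (buckled al be) s t in
  admissible_cell c /\ Ecell v2 v3 c = 6 * vertex_energy v2 v3 l l th.
Proof.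
move=> l0 th0 al0 hal hl c.
have edge i : dist3 (c (sh i 1)) (c i) = l /\ dist3 (c (sh i 5)) (c i) = l.
  have [e1 e2 _ _] := buckled_cell_dots al be s t i.
  by rewrite /dist3 /enorm e1 e2 hl sqrtr_sqr gtr0_norm.
have diagonal i : dist3 (c i) (c (sh i 4)) = third_side l l th.
  have [_ _ e _] := buckled_cell_dots al be s t i.
  by rewrite /dist3 /enorm e hal /third_side; congr Num.sqrt; ring.
have corner i : angle (c (sh i 5)) (c i) (c (sh i 1)) = th.
  have [_ _ _ e] := buckled_cell_dots al be s t i; have [e1 e2] := edge i.
  rewrite /angle e -[enorm _]/(dist3 _ _) -[enorm (_ - _)]/(dist3 _ _) e1 e2.
  have -> : (3 * be ^+ 2 + 2 * al * be) / (l * l) = cos th.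
    have -> : 3 * be ^+ 2 + 2 * al * be = l ^+ 2 * cos th by nra.
    by rewrite expr2; field; rewrite gt_eqF.
  by rewrite cosK // in_itv.
split => [i|].
  have [_ _ e _] := buckled_cell_dots al be s t i; have [_ e2] := edge i.
  by rewrite -!dist3_gt0 dist3C e2 l0 sqrtr_gt0 e pmulr_rgt0 ?exprn_gt0.
have sum6 (F : 'I_6 -> R) x : (forall i, F i = x) -> \sum_(i < 6) F i = 6 * x.
  by move=> Fx; rewrite (eq_bigr _ (fun i _ => Fx i)) sumr_const card_ord mulr_natl.
rewrite /Ecell (sum6 _ (v2 l)) => [|i]; last by rewrite dist3C (edge i).2.
rewrite (sum6 _ (v2 (third_side l l th))) => [|i]; last by rewrite diagonal.
rewrite (sum6 _ (v3 th)) => [|i]; last by rewrite corner.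
by rewrite /vertex_energy; field.
Qed.

(* [be] solves [3 be^2 + 2 al be = l^2 cos th], which needs [cos th >= -1/2]. *)
Lemma buckled_params (l th : R) : 0 < l -> 0 < th <= 2 * pi / 3 -> exists al be,
  [/\ 0 < al, al ^+ 2 = l ^+ 2 * (1 - cos th) & al ^+ 2 + 2 * al * be + 3 * be ^+ 2 = l ^+ 2].
Proof.
move=> l0 /andP[th0 th23]; have hp := pi_ge2 R.
have c1 : cos th < 1.
  by rewrite -cos0 ltr_cos ?in_itv /= ?lexx ?pi_ge0 ?(ltW th0) //; lra.
have c2 : - 2^-1 <= cos th by rewrite -cos_2pi3 cos_le_cos //; lra.
set al := l * Num.sqrt (1 - cos th); set x := l * Num.sqrt (1 + 2 * cos th).
have hal : al ^+ 2 = l ^+ 2 * (1 - cos th) by rewrite exprMn sqr_sqrtr // subr_ge0 ltW.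
have hx : x ^+ 2 = l ^+ 2 * (1 + 2 * cos th) by rewrite exprMn sqr_sqrtr //; lra.
exists al, ((x - al) / 3); split => //; first by rewrite mulr_gt0 // sqrtr_gt0 subr_gt0.
have -> : al ^+ 2 + 2 * al * ((x - al) / 3) + 3 * ((x - al) / 3) ^+ 2 = (2 * al ^+ 2 + x ^+ 2) / 3.
  by field.
by rewrite hal hx; field.
Qed.

Lemma buckled_deformation (v2 v3 : R -> R) (l th : R) : 0 < l -> 0 < th <= 2 * pi / 3 ->
  exists z : deformation R, forall s t,
    admissible_cell (cell_of z s t) /\ Ecell v2 v3 (cell_of z s t) = 6 * vertex_energy v2 v3 l l th.
Proof.
move=> l0 hth; have [al [be [al0 hal hl]]] := buckled_params l0 hth.
have th0 : 0 <= th <= pi by have := pi_ge2 R; case/andP: hth => ? ?; lra.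
by exists (buckled al be) => s t; apply: buckled_cell.
Qed.

End Buckled.

Section Averages.
Variables (R : realType) (T : eqType).
Implicit Types (s : seq T) (g : T -> R) (K : R).

Lemma sum_ge_const s g K : (forall x, K <= g x) -> K * (size s)%:R <= \sum_(x <- s) g x.
Proof.
move=> h; elim: s => [|x s IH]; first by rewrite big_nil mulr0.
by rewrite big_cons /= -addn1 natrD mulrDr mulr1 addrC lerD.
Qed.

Lemma sum_le_const s g K : (forall x, g x <= K) -> \sum_(x <- s) g x <= K * (size s)%:R.
Proof.
move=> h; elim: s => [|x s IH]; first by rewrite big_nil mulr0.
by rewrite big_cons /= -addn1 natrD mulrDr mulr1 addrC lerD.
Qed.

Lemma sum_ge_const_gap s g K eta x0 : (forall x, K <= g x) -> x0 \in s -> K + eta <= g x0 ->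
  K * (size s)%:R + eta <= \sum_(x <- s) g x.
Proof.
move=> h s0 hx0; rewrite (big_rem x0) //=.
have := sum_ge_const (rem x0 s) h; rewrite size_rem //.
by case: s s0 => // y s' _ /=; rewrite -addn1 natrD mulrDr mulr1; lra.
Qed.

End Averages.

Lemma zrange_mem (N : nat) (x : int) : `|x| <= N%:Z -> x \in zrange N.
Proof.
rewrite ler_norml => /andP[h1 h2]; apply/mapP; exists (absz (x + N%:Z)); last by lia.
by rewrite mem_iota; lia.
Qed.

Section Energy.
Variables (R : realType) (v2 v3 : R -> R).

Lemma ball_cells_mem m s t : in_ball R m (s, t) -> (s, t) \in ball_cells R m.
Proof.
move=> hb; have [hs ht] := ball_in_box hb.
have box (x : int) : `|x%:~R : R| <= 3 * m%:R + 3 -> x \in zrange (3 * m + 3).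
  move=> hx; apply: zrange_mem; rewrite -(ler_int R) intr_norm.
  by apply: le_trans hx _; rewrite -pmulrn natrD natrM; lra.
by rewrite mem_filter hb; apply/allpairsP; exists (s, t); rewrite !box.
Qed.

Lemma in_ball_origin m : (1 <= m)%N -> in_ball R m (0, 0).
Proof.
move=> m1; rewrite /in_ball /barycenter /= !mulr0z !mulr0 !addr0 !expr_div_n sqrt3_sqr.
have : 1 <= m%:R :> R by rewrite ler1n.
by move=> h; rewrite expr2; nra.
Qed.

Lemma in_ball_large s t : in_ball R (3 + 5 * (`|s| + `|t|))%N (s, t).
Proof.
rewrite /in_ball /barycenter /=; set S : R := s%:~R; set T : R := t%:~R.
have -> : (sqrt3 R / 2 + sqrt3 R / 2 * S + sqrt3 R * T) ^+ 2 = 3 * (1 / 2 + S / 2 + T) ^+ 2.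
  by rewrite -(sqrt3_sqr R); field.
set A : R := (`|s| + `|t|)%N%:R.
have -> : (3 + 5 * (`|s| + `|t|))%N%:R = 3 + 5 * A :> R by rewrite /A natrD natrM.
have /ler_normlP[S1 S2] : `|S| <= A by rewrite /S /A -intr_norm natrD !natr_absz lerDl intr_norm.
have /ler_normlP[T1 T2] : `|T| <= A by rewrite /T /A -intr_norm natrD !natr_absz lerDr intr_norm.
rewrite !expr2; nra.
Qed.

Lemma size_ball_cells_gt0 m : (1 <= m)%N -> (0 < size (ball_cells R m))%N.
Proof. by move/in_ball_origin/ball_cells_mem; case: (ball_cells R m). Qed.

Implicit Types (y : deformation R) (K : R).

Lemma avg_energy_ge y m K : (1 <= m)%N ->
  (forall s t, K <= Ecell v2 v3 (cell_of y s t)) -> K <= avg_energy v2 v3 y m.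
Proof.
move=> m1 h; rewrite /avg_energy ler_pdivlMr ?ltr0n ?size_ball_cells_gt0 //.
by apply: sum_ge_const => st; apply: h.
Qed.

Lemma avg_energy_le y m K : (1 <= m)%N ->
  (forall s t, Ecell v2 v3 (cell_of y s t) <= K) -> avg_energy v2 v3 y m <= K.
Proof.
move=> m1 h; rewrite /avg_energy ler_pdivrMr ?ltr0n ?size_ball_cells_gt0 //.
by apply: sum_le_const => st; apply: h.
Qed.

Lemma avg_energy_gap y m K eta s0 t0 : (1 <= m)%N ->
  (forall s t, K <= Ecell v2 v3 (cell_of y s t)) ->
  K + eta <= Ecell v2 v3 (cell_of y s0 t0) -> (s0, t0) \in ball_cells R m ->
  K + eta / (size (ball_cells R m))%:R <= avg_energy v2 v3 y m.
Proof.
move=> m1 h hgap hin; have N0 := size_ball_cells_gt0 m1.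
rewrite /avg_energy ler_pdivlMr ?ltr0n // mulrDl divfK ?lt0r_neq0 ?ltr0n //.
by apply: (sum_ge_const_gap _ hin) => // st; apply: h.
Qed.

Lemma energy_ge_avg y m : (1 <= m)%N -> ((avg_energy v2 v3 y m)%:E <= energy v2 v3 y)%E.
Proof. by move=> m1; apply: ereal_sup_ubound; exists m. Qed.

Lemma energy_ge_cells y K :
  (forall s t, K <= Ecell v2 v3 (cell_of y s t)) -> (K%:E <= energy v2 v3 y)%E.
Proof. by move=> h; apply: le_trans (energy_ge_avg y (leqnn 1)); rewrite lee_fin avg_energy_ge. Qed.

Lemma energy_le_cells y K :
  (forall s t, Ecell v2 v3 (cell_of y s t) <= K) -> (energy v2 v3 y <= K%:E)%E.
Proof. by move=> h; apply: ge_ereal_sup => _ [m m1 <-]; rewrite lee_fin avg_energy_le. Qed.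

Lemma energy_gt_cells y K s0 t0 : (forall s t, K <= Ecell v2 v3 (cell_of y s t)) ->
  K < Ecell v2 v3 (cell_of y s0 t0) -> exists2 eps, 0 < eps & ((K + eps)%:E <= energy v2 v3 y)%E.
Proof.
move=> h hgt; set m := (3 + 5 * (`|s0| + `|t0|))%N.
have m1 : (1 <= m)%N by [].
have N0 : (0 : R) < (size (ball_cells R m))%:R by rewrite ltr0n size_ball_cells_gt0.
set eta := Ecell v2 v3 (cell_of y s0 t0) - K.
exists (eta / (size (ball_cells R m))%:R); first by rewrite divr_gt0 // subr_gt0.
apply: le_trans (energy_ge_avg y m1); rewrite lee_fin.
by apply: avg_energy_gap => //; [rewrite addrC subrK | exact/ball_cells_mem/in_ball_large].
Qed.

End Energy.

Section GroundStates.
Variables (R : realType) (v2 v3 : R -> R) (delta : R).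
Hypothesis v2_ge : forall x : R, 0 < x -> -1 <= v2 x.
Hypothesis v2_1 : v2 1 = -1.
Hypothesis v2_decr : forall x x' : R, 0 < x -> x < x' -> x' < 1 -> v2 x' < v2 x.
Hypothesis v2_incr : forall x x' : R, 1 <= x -> x < x' -> v2 x < v2 x'.
Hypothesis v3_ge0 : forall th : R, 0 <= th <= pi -> 0 <= v3 th.
Hypothesis v3_opt : v3 (2 * pi / 3) = 0.
Hypothesis delta_range : 0 < delta <= 1 / 5.
Hypothesis delta_short : v2 (1 - delta) > 11 + 12 * v2 (sqrt3 R).
Hypothesis delta_long :
  v2 (1 + delta) > -1 + 12 * v2 (sqrt3 R) - 12 * v2 (sqrt3 R * (1 - delta) ^+ 2).
Hypothesis delta_angle : forall th : R, 0 <= th <= pi -> `|th - 2 * pi / 3| >= delta ->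
  v3 th > 6 + 6 * v2 (sqrt3 R).

Definition in_box (l1 l2 th : R) : Prop :=
  [/\ `|l1 - 1| < delta, `|l2 - 1| < delta & `|th - 2 * pi / 3| < delta].

Hypothesis convexity : forall l1 l2 th l1' l2' th' lam,
  in_box l1 l2 th -> in_box l1' l2' th' -> (l1, l2, th) <> (l1', l2', th') -> 0 < lam < 1 ->
  vertex_energy v2 v3 (lam * l1 + (1 - lam) * l1') (lam * l2 + (1 - lam) * l2')
    (lam * th + (1 - lam) * th')
  < lam * vertex_energy v2 v3 l1 l2 th + (1 - lam) * vertex_energy v2 v3 l1' l2' th'.

Definition box_energies : set R :=
  [set x | exists l1 l2 th, in_box l1 l2 th /\ x = vertex_energy v2 v3 l1 l2 th].

Lemma v2_le_incr x x' : 1 <= x -> x <= x' -> v2 x <= v2 x'.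
Proof. by move=> x1; rewrite le_eqVlt => /predU1P[-> //|/(v2_incr x1)/ltW]. Qed.

Lemma shrunk_sqrt3_bounds : 1 <= sqrt3 R * (1 - delta) ^+ 2 <= sqrt3 R.
Proof.
have /andP[s1 s2] := sqrt3_bounds R; have /andP[d0 d15] := delta_range.
have p1 : 16 / 25 <= (1 - delta) ^+ 2 by rewrite expr2; nra.
have p2 : (1 - delta) ^+ 2 <= 1 by rewrite expr2; nra.
by apply/andP; split; nra.
Qed.

Lemma third_side_ge l1 l2 th : 1 - delta <= l1 -> 1 - delta <= l2 ->
  2 * pi / 3 - delta <= th -> th <= pi -> sqrt3 R * (1 - delta) ^+ 2 <= third_side l1 l2 th.
Proof.
move=> h1 h2 h3 h4; have hk := cos_le_near_2pi3 delta_range h3 h4.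
have /andP[d0 d15] := delta_range.
have s0 : 0 <= sqrt3 R * (1 - delta) ^+ 2 by rewrite mulr_ge0 ?sqrtr_ge0 ?sqr_ge0.
rewrite -(ger0_norm s0) -sqrtr_sqr ler_wsqrtr // exprMn sqrt3_sqr.
set k := cos th in hk *; set p := (1 - delta) ^+ 2.
have hl : p <= l1 * l2 by rewrite /p expr2 ler_pM //; lra.
have hq : 3 * p <= 2 * (1 - k) by rewrite /p expr2; nra.
have : p * (3 * p) <= l1 * l2 * (2 * (1 - k)).
  by have p0 : 0 <= p := sqr_ge0 _; apply: ler_pM => //; lra.
by have := sqr_ge0 (l1 - l2); rewrite !expr2; nra.
Qed.

Lemma in_box_facts l1 l2 th : in_box l1 l2 th ->
  [/\ 0 < l1, 0 < l2, 0 <= th <= pi & 1 <= third_side l1 l2 th].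
Proof.
have hp := pi_ge2 R; have /andP[d0 d15] := delta_range.
case; rewrite !ltr_norml => /andP[b1 b1'] /andP[b2 b2'] /andP[b3 b3'].
split; [lra | lra | apply/andP; split; lra |].
have /andP[w1 _] := shrunk_sqrt3_bounds.
by apply: le_trans w1 _; apply: third_side_ge; lra.
Qed.

Lemma vertex_energy_lbound l1 l2 th : 0 < l1 -> 0 < l2 -> 0 <= th <= pi ->
  0 < third_side l1 l2 th -> - (3 / 2) <= vertex_energy v2 v3 l1 l2 th.
Proof.
move=> l10 l20 th0 s0.
have := v2_ge l10; have := v2_ge l20; have := v2_ge s0; have := v3_ge0 th0.
rewrite /vertex_energy; lra.
Qed.

Lemma box_energies_ref : box_energies (vertex_energy v2 v3 1 1 (2 * pi / 3)).
Proof.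
have /andP[d0 _] := delta_range.
by exists 1, 1, (2 * pi / 3); split => //; split; rewrite subrr normr0.
Qed.

Lemma box_energies_has_inf : has_inf box_energies.
Proof.
split; first by exists (vertex_energy v2 v3 1 1 (2 * pi / 3)); exact: box_energies_ref.
exists (- (3 / 2)) => _ [l1 [l2 [th [hb ->]]]].
by have [h1 h2 h3 h4] := in_box_facts hb; apply: vertex_energy_lbound => //; lra.
Qed.

Lemma vertex_energy_ref : vertex_energy v2 v3 1 1 (2 * pi / 3) = - 2^-1 + v2 (sqrt3 R).
Proof. by rewrite /vertex_energy third_side_ref v2_1 v3_opt; field. Qed.

Lemma vertex_energy_gt_short l1 l2 th : 0 < l1 -> l1 <= 1 - delta -> 0 < l2 ->
  0 <= th <= pi -> 0 < third_side l1 l2 th ->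
  - 2^-1 + v2 (sqrt3 R) < vertex_energy v2 v3 l1 l2 th.
Proof.
move=> l10 hl1 l20 th0 s0; have /andP[s1 _] := sqrt3_bounds R.
have /andP[d0 _] := delta_range.
have : v2 (1 - delta) <= v2 l1.
  move: hl1; rewrite le_eqVlt => /predU1P[-> //|hl1].
  by apply/ltW/v2_decr => //; lra.
have := v2_ge l20; have := v2_ge s0; have := v3_ge0 th0.
have s3 : 0 < sqrt3 R by lra.
by have := v2_ge s3; have := delta_short; rewrite /vertex_energy; lra.
Qed.

Lemma vertex_energy_gt_long l1 l2 th : 1 + delta <= l1 -> 1 - delta < l2 ->
  `|th - 2 * pi / 3| < delta -> th <= pi ->
  - 2^-1 + v2 (sqrt3 R) < vertex_energy v2 v3 l1 l2 th.
Proof.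
move=> hl1 hl2 /ltr_normlP[t1 t2] thpi; have /andP[d0 d15] := delta_range.
have /andP[w1 w2] := shrunk_sqrt3_bounds.
have hs : sqrt3 R * (1 - delta) ^+ 2 <= third_side l1 l2 th.
  by apply: third_side_ge; lra.
have d1 : 1 <= 1 + delta by lra.
have := v2_le_incr w1 hs; have := v2_le_incr w1 w2; have := v2_le_incr d1 hl1.
have l20 : 0 < l2 by lra.
have th0 : 0 <= th <= pi by have := pi_ge2 R; rewrite thpi andbT; lra.
have := v2_ge l20; have := v3_ge0 th0; have := delta_long.
by rewrite /vertex_energy; lra.
Qed.

Lemma vertex_energy_gt_ref l1 l2 th : 0 < l1 -> 0 < l2 -> 0 <= th <= pi ->
  0 < third_side l1 l2 th -> ~ in_box l1 l2 th ->
  vertex_energy v2 v3 1 1 (2 * pi / 3) < vertex_energy v2 v3 l1 l2 th.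
Proof.
move=> l10 l20 th0 s0 out; rewrite vertex_energy_ref.
have s0' : 0 < third_side l2 l1 th by rewrite third_sideC.
have [th_far|th_near] := lerP delta `|th - 2 * pi / 3|.
  have /andP[s1 _] := sqrt3_bounds R; have s3 : 0 < sqrt3 R by lra.
  have := delta_angle th0 th_far; have := v2_ge s3.
  have := v2_ge l10; have := v2_ge l20; have := v2_ge s0.
  by rewrite /vertex_energy; lra.
have [l1_short|l1_ok] := lerP l1 (1 - delta); first exact: vertex_energy_gt_short.
have [l2_short|l2_ok] := lerP l2 (1 - delta).
  by rewrite vertex_energyC; exact: vertex_energy_gt_short.
have thpi : th <= pi by case/andP: th0.
have [l1_long|l1_ok'] := lerP (1 + delta) l1; first exact: vertex_energy_gt_long.
have [l2_long|l2_ok'] := lerP (1 + delta) l2.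
  by rewrite vertex_energyC; exact: vertex_energy_gt_long.
by case: out; split => //; rewrite ltr_norml; apply/andP; split; lra.
Qed.

Definition min_vertex_energy : R := inf box_energies.

Lemma min_vertex_energy_le l1 l2 th : 0 < l1 -> 0 < l2 -> 0 <= th <= pi ->
  0 < third_side l1 l2 th -> min_vertex_energy <= vertex_energy v2 v3 l1 l2 th.
Proof.
move=> l10 l20 th0 s0; have [_ lb] := box_energies_has_inf.
have [inb|out] := pselect (in_box l1 l2 th); first by apply: ge_inf => //; exists l1, l2, th.
apply/ltW/(le_lt_trans _ (vertex_energy_gt_ref l10 l20 th0 s0 out)).
exact: ge_inf box_energies_ref.
Qed.

Lemma Ecell_ge_min_vertex_energy (c : cell R) : admissible_cell c ->
  6 * min_vertex_energy <= Ecell v2 v3 c.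
Proof.
move=> adm; rewrite Ecell_vertex_sum //.
have -> : 6 * min_vertex_energy = \sum_(i < 6) min_vertex_energy.
  by rewrite sumr_const card_ord mulr_natl.
apply: ler_sum => i _.
have [h1 h2 h3] := admissible_neighbours i adm.
apply: min_vertex_energy_le; rewrite ?dist3_gt0 ?angle_in_0pi //.
by rewrite -law_of_cosines // dist3_gt0.
Qed.

Lemma box_symmetrize l1 l2 th : in_box l1 l2 th ->
  exists l, in_box l l th /\ vertex_energy v2 v3 l l th <= vertex_energy v2 v3 l1 l2 th.
Proof.
move=> hb; have [e|l12] := eqVneq l1 l2; first by rewrite -e in hb *; exists l1; split.
have hb' : in_box l2 l1 th by case: hb.
have ne : (l1, l2, th) <> (l2, l1, th) by case=> e; move: l12; rewrite e eqxx.
have half : 0 < (2^-1 : R) < 1 by lra.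
have := convexity hb hb' ne half.
set l := 2^-1 * l1 + (1 - 2^-1) * l2; set f := vertex_energy v2 v3 l1 l2 th.
have -> : 2^-1 * l2 + (1 - 2^-1) * l1 = l by rewrite /l; field.
have -> : 2^-1 * th + (1 - 2^-1) * th = th by ring.
rewrite [vertex_energy _ _ l2 l1 _]vertex_energyC -/f.
have -> : 2^-1 * f + (1 - 2^-1) * f = f by ring.
move/ltW => hf; exists l; split => //.
case: hb => /ltr_normlP[a1 a2] /ltr_normlP[b1 b2] ht.
by split => //; rewrite /l ltr_norml; apply/andP; split; lra.
Qed.

Lemma box_flatten l th : in_box l l th -> 2 * pi / 3 <= th ->
  vertex_energy v2 v3 l l (2 * pi / 3) <= vertex_energy v2 v3 l l th.
Proof.
move=> hb th_ge; have [l0 _ th0 _] := in_box_facts hb.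
have hb_ref : in_box l l (2 * pi / 3).
  by case: hb => h1 _ _; split => //; rewrite subrr normr0; case/andP: delta_range.
have [_ _ _ s1] := in_box_facts hb_ref.
have hcos : cos th <= cos (2 * pi / 3).
  by apply: cos_le_cos => //; [have := pi_ge2 R; lra | case/andP: th0].
have := v2_le_incr s1 (third_side_le (ltW l0) hcos); have := v3_ge0 th0.
by rewrite /vertex_energy v3_opt; lra.
Qed.

Lemma min_vertex_energy_approx eps : 0 < eps -> exists l th,
  [/\ 0 < l, 0 < th <= 2 * pi / 3 & vertex_energy v2 v3 l l th < min_vertex_energy + eps].
Proof.
move=> e0; have [_ [l1 [l2 [th [hb ->]]]] hlt] := inf_adherent e0 box_energies_has_inf.
have [l [hb' hle]] := box_symmetrize hb.
have [l0 _ _ _] := in_box_facts hb'.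
have th0 : 0 < th.
  case: hb' => _ _ /ltr_normlP[t1 _]; have := pi_ge2 R; have /andP[_ d15] := delta_range.
  lra.
have [th_le|th_gt] := lerP th (2 * pi / 3).
  by exists l, th; split => //; [rewrite th0 | apply: le_lt_trans hlt].
exists l, (2 * pi / 3); split => //; first by rewrite lexx andbT; have := pi_ge2 R; lra.
exact: le_lt_trans (box_flatten hb' (ltW th_gt)) (le_lt_trans hle hlt).
Qed.

Lemma ground_state_energy_le (y : deformation R) eps : ground_state v2 v3 y -> 0 < eps ->
  (energy v2 v3 y <= (6 * min_vertex_energy + eps)%:E)%E.
Proof.
move=> [_ ground] e0; have e6 : 0 < eps / 6 by rewrite divr_gt0.
have [l [th [l0 hth hl]]] := min_vertex_energy_approx e6.
have [z hz] := buckled_deformation v2 v3 l0 hth.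
apply: le_trans (ground z (fun s t => (hz s t).1)) _.
by apply: energy_le_cells => s t; rewrite (hz s t).2; lra.
Qed.

Lemma ground_state_optimal_cells (y : deformation R) : ground_state v2 v3 y ->
  forall s t, optimal_cell v2 v3 (cell_of y s t).
Proof.
move=> gy s t; split => [|c' adc']; first exact: gy.1.
rewrite leNgt; apply/negP => hlt.
have cells_ge s' t' := Ecell_ge_min_vertex_energy (gy.1 s' t').
have [eps e0 hE] := energy_gt_cells cells_ge (le_lt_trans (Ecell_ge_min_vertex_energy adc') hlt).
have e2 : 0 < eps / 2 by rewrite divr_gt0.
have := le_trans hE (ground_state_energy_le gy e2).
by rewrite lee_fin; lra.
Qed.

End GroundStates.

Lemma optimal_cells_ground_state (R : realType) (v2 v3 : R -> R) (y : deformation R) :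
  (forall s t, optimal_cell v2 v3 (cell_of y s t)) -> ground_state v2 v3 y.
Proof.
move=> opt; have ady : admissible y by move=> s t; case: (opt s t).
split => // z adz; apply: (@le_trans _ _ (Ecell v2 v3 (cell_of y 0 0))%:E).
  by apply: energy_le_cells => s t; apply: (opt s t).2.
by apply: energy_ge_cells => s t; apply: (opt 0 0).2.
Qed.

Theorem mainTheorem1 (R : realType) (v2 v3 : R -> R) (delta : R) :
  standing_assumptions v2 v3 delta ->
  forall y : deformation R,
    ground_state v2 v3 y <-> (forall s t : int, optimal_cell v2 v3 (cell_of y s t)).
Proof.
move=> [[_ [v2_ge [v2_1 [_ [v2_decr [v2_incr _]]]]]]
        [[_ [v3_ge0 [v3_opt _]]] [delta_range [short [long [angle convex]]]]]] y.
split; last exact: optimal_cells_ground_state.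
exact: (ground_state_optimal_cells v2_ge v2_1 v2_decr v2_incr v3_ge0 v3_opt delta_range
          short long angle convex).
Qed.
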